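(* Let $T$ be a complete theory in a language $\mathcal{L}$ with monster model $\mathbb{M}$, and let $\varphi(x;y_1,\ldots,y_r)\in\mathcal{L}$ be an NIP formula. Then there exist $d'=d'(\varphi)\in\mathbb{N}$ and a finite set of $\mathcal{L}$-formulas $\Delta$ such that: for every $k\in\mathbb{N}$, every $b\in\mathbb{M}^x$ and every $\Delta$-indiscernible $k$-dimensional array $(a_{\bar i}:\bar i\in I_1\times\cdots\times I_k)$ with each $I_s$ a finite linear order, there exist $\bar j_1,\ldots,\bar j_{d'}\in I_1\times\cdots\times I_k$ such that for all $\bar i^\alpha_1,\ldots,\bar i^\alpha_r\in I_1\times\cdots\times I_k$ ($\alpha\in\{0,1\}$): if for every $1\le s\le k$, $$\operatorname{qftp}_<(i^0_{1,s},\ldots,i^0_{r,s}/j_{1,s},\ldots,j_{d',s})=\operatorname{qftp}_<(i^1_{1,s},\ldots,i^1_{r,s}/j_{1,s},\ldots,j_{d',s}),$$ then $\models\varphi(b;a_{\bar i^0_1},\ldots,a_{\bar i^0_r})\leftrightarrow\varphi(b;a_{\bar i^1_1},\ldots,a_{\bar i^1_r})$.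
   Context: A formula is NIP if every formula obtained from it by partitioning its variables into two groups is NIP. Tuples $\bar i=(i_1,\ldots,i_k)$ have coordinates written $i_s$ (so $\bar i^\alpha_t=(i^\alpha_{t,1},\ldots,i^\alpha_{t,k})$ and $\bar j_t=(j_{t,1},\ldots,j_{t,k})$); $\operatorname{qftp}_<$ is the quantifier-free type in the language of the order. An array $(a_{\bar i}:\bar i\in I_1\times\cdots\times I_k)$ is $\Delta$-indiscernible if for every $\psi(x_1,\ldots,x_m)\in\Delta$ and all $\bar i^\alpha_1,\ldots,\bar i^\alpha_m$, $\alpha\in\{0,1\}$, such that for each coordinate $s$ the tuples $(i^0_{1,s},\ldots,i^0_{m,s})$ and $(i^1_{1,s},\ldots,i^1_{m,s})$ have the same quantifier-free order type, we have $\models\psi(a_{\bar i^0_1},\ldots,a_{\bar i^0_m})\leftrightarrow\psi(a_{\bar i^1_1},\ldots,a_{\bar i^1_m})$. *)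

From Stdlib Require Lists.List.
From mathcomp Require Import all_boot.
Set Implicit Arguments. Unset Strict Implicit. Unset Printing Implicit Defensive.

Record language := Language {
  funs : Type; fun_arity : funs -> nat;
  rels : Type; rel_arity : rels -> nat }.

Inductive term (L : language) (V : Type) : Type :=
| tvar : V -> term L V
| tapp : forall f : funs L, ('I_(fun_arity f) -> term L V) -> term L V.

Inductive form (L : language) : Type -> Type :=
| fEq  : forall V, term L V -> term L V -> form L V
| fRel : forall V (R : rels L), ('I_(rel_arity R) -> term L V) -> form L V
| fNot : forall V, form L V -> form L V
| fAnd : forall V, form L V -> form L V -> form L V
| fOr  : forall V, form L V -> form L V -> form L V
| fEx  : forall V, form L (option V) -> form L V
| fAll : forall V, form L (option V) -> form L V.

Record structure (L : language) := Structure {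
  carrier :> Type;
  finterp : forall f : funs L, ('I_(fun_arity f) -> carrier) -> carrier;
  rinterp : forall R : rels L, ('I_(rel_arity R) -> carrier) -> Prop }.

Fixpoint teval (L : language) (M : structure L) (V : Type) (e : V -> M)
  (t : term L V) {struct t} : M :=
  match t with
  | tvar v => e v
  | tapp f ts => @finterp L M f (fun i => teval e (ts i))
  end.

Definition ext (M V : Type) (e : V -> M) (a : M) : option V -> M :=
  fun o => match o with Some v => e v | None => a end.

Fixpoint sat (L : language) (M : structure L) (V : Type) (phi : form L V)
  {struct phi} : (V -> M) -> Prop :=
  match phi in form _ V' return (V' -> M) -> Prop with
  | fEq _ t1 t2 => fun e => teval e t1 = teval e t2
  | fRel _ R ts => fun e => @rinterp L M R (fun i => teval e (ts i))
  | fNot _ p => fun e => ~ sat p e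
  | fAnd _ p q => fun e => sat p e /\ sat q e
  | fOr _ p q => fun e => sat p e \/ sat q e
  | fEx _ p => fun e => exists a : M, sat p (ext e a)
  | fAll _ p => fun e => forall a : M, sat p (ext e a)
  end.

(* phi(u; w) where u are the variables in P and w the remaining ones is NIP
   (in Th(M)): some finite set of u-tuples cannot be shattered in M. *)
Definition NIP_partition (L : language) (M : structure L) (V : Type)
  (phi : form L V) (P : V -> bool) : Prop :=
  exists N : nat, ~ exists (u : 'I_N -> V -> M) (w : {set 'I_N} -> V -> M),
    forall (i : 'I_N) (S : {set 'I_N}),
      sat phi (fun v => if P v then u i v else w S v) <-> i \in S.

Definition NIP (L : language) (M : structure L) (V : Type) (phi : form L V) :=
  forall P : V -> bool, NIP_partition M phi P.

(* Equality of quantifier-free order types of two tuples of naturals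
   (ordinals 'I_N carry the restriction of the order of nat). *)
Definition qftp_eq (A : Type) (u v : A -> nat) : Prop :=
  forall l l' : A, (u l < u l') = (v l < v l') /\ (u l == u l') = (v l == v l').

(* concatenation of a tuple t with a parameter tuple c: qftp(t / c) *)
Definition tp_over (p d : nat) (t : 'I_p -> nat) (c : 'I_d -> nat) :
  'I_p + 'I_d -> nat :=
  fun z => match z with inl l => t l | inr q => c q end.

(* Index tuples of a k-dimensional array over I_1 x ... x I_k with
   I_s = 'I_(N s). *)
Definition idx (k : nat) (N : 'I_k -> nat) := forall s : 'I_k, 'I_(N s).

(* Delta-indiscernibility of an array of m-tuples. A formula of Delta is a
   formula psi(x_1,...,x_p) with each x_l an m-tuple of variables. *)
Definition indiscernible (L : language) (M : structure L) (m : nat)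
  (Delta : seq {p : nat & form L ('I_p * 'I_m)}) (k : nat) (N : 'I_k -> nat)
  (a : idx N -> 'I_m -> M) : Prop :=
  forall psi, Stdlib.Lists.List.In psi Delta ->
  forall (i0 i1 : 'I_(projT1 psi) -> idx N),
    (forall s : 'I_k, qftp_eq (fun l => nat_of_ord (i0 l s))
                              (fun l => nat_of_ord (i1 l s))) ->
    (sat (projT2 psi) (fun z => a (i0 z.1) z.2) <->
     sat (projT2 psi) (fun z => a (i1 z.1) z.2)).

(* Fix b and read F(i) := phi(b; a_i) as a predicate on r-tuples i of array
   indices. Call v a flip in coordinate s if, for some tuple i that uses v but
   not v+1 there, moving those entries from v up to v+1 changes F. Two tuples
   with the same order type over the flips in every coordinate are joined by
   unit moves of this kind that avoid flips, so F agrees on them: the flips can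
   serve as the parameters j. There are fewer than (4r+1)K flips per
   coordinate, K the NIP bound: otherwise K of them have non-interfering
   witness tuples (a digraph with out-degree at most 2r has independent sets of
   proportional size), toggling any subset of those K moves keeps the order
   type of the whole configuration, and Delta-indiscernibility for the formulas
   exists x. /\_t +-phi(x; y_t) makes the K witness tuples shattered by phi. *)

From mathcomp Require Import all_boot zify boolp.
Set Implicit Arguments. Unset Strict Implicit. Unset Printing Implicit Defensive.

Section Syntax.

Variable L : language.

Fixpoint trename (V W : Type) (sg : V -> W) (t : term L V) : term L W :=
  match t with
  | tvar v => tvar L (sg v)
  | tapp f ts => tapp (fun i => trename sg (ts i))
  end.

Fixpoint frename (V : Type) (p : form L V) {struct p} :
  forall W, (V -> W) -> form L W :=
  match p in form _ V0 return forall W, (V0 -> W) -> form L W with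
  | fEq _ t1 t2 => fun W sg => fEq (trename sg t1) (trename sg t2)
  | fRel _ R ts => fun W sg => @fRel L W R (fun i => trename sg (ts i))
  | fNot _ q => fun W sg => fNot (frename q sg)
  | fAnd _ q1 q2 => fun W sg => fAnd (frename q1 sg) (frename q2 sg)
  | fOr _ q1 q2 => fun W sg => fOr (frename q1 sg) (frename q2 sg)
  | fEx _ q => fun W sg => fEx (frename q (option_map sg))
  | fAll _ q => fun W sg => fAll (frename q (option_map sg))
  end.

Variable M : structure L.

Lemma teval_rename V W (sg : V -> W) (e : W -> M) (t : term L V) :
  teval e (trename sg t) = teval (e \o sg) t.
Proof. by elim: t => [//|f ts IH] /=; congr finterp; apply: funext => i. Qed.

Lemma ext_option_map V W (sg : V -> W) (e : W -> M) a :
  ext e a \o option_map sg = ext (e \o sg) a.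
Proof. by apply: funext => -[]. Qed.

Lemma sat_rename V (p : form L V) W (sg : V -> W) (e : W -> M) :
  sat (frename p sg) e <-> sat p (e \o sg).
Proof.
elim: p W sg e => {}V.
- by move=> t1 t2 W sg e /=; rewrite !teval_rename.
- move=> R ts W sg e /=.
  by under eq_fun do rewrite teval_rename.
- by move=> q IH W sg e /=; rewrite IH.
- by move=> q1 IH1 q2 IH2 W sg e /=; rewrite IH1 IH2.
- by move=> q1 IH1 q2 IH2 W sg e /=; rewrite IH1 IH2.
- by move=> q IH W sg e /=; split=> -[a Ha]; exists a; move: Ha; rewrite IH ext_option_map.
- by move=> q IH W sg e /=; split=> Hq a; move: (Hq a); rewrite IH ext_option_map.
Qed.

Definition ord0_elim (W : Type) (i : 'I_0) : W :=
  False_rect W (Bool.diff_false_true (ltn_ord i)).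

Definition unlift_var (n : nat) (W : Type) (z : 'I_n.+1 + W) : option ('I_n + W) :=
  match z with
  | inl i => omap inl (unlift ord0 i)
  | inr w => Some (inr w)
  end.

Fixpoint fExs (W : Type) (n : nat) : form L ('I_n + W) -> form L W :=
  match n return form L ('I_n + W) -> form L W with
  | 0 => fun p => frename p (fun z => match z with inl i => ord0_elim W i | inr w => w end)
  | n'.+1 => fun p => fExs (fEx (frename p (@unlift_var n' W)))
  end.

Definition catv (W : Type) (n : nat) (x : 'I_n -> M) (e : W -> M) : 'I_n + W -> M :=
  fun z => match z with inl i => x i | inr w => e w end.

Lemma sat_fExs W n (p : form L ('I_n + W)) (e : W -> M) :
  sat (fExs p) e <-> exists x : 'I_n -> M, sat p (catv x e).
Proof.
elim: n p e => [|n IH] p e /=.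
  rewrite sat_rename; split=> [He|[x]]; first exists (@ord0_elim M).
    by congr (sat p): He; apply: funext => -[[]|].
  by congr (sat p); apply: funext => -[[]|].
rewrite IH; split=> [[x [a]]|[y Hy]].
  move=> /sat_rename Ha.
  exists (fun i => if unlift ord0 i is Some i' then x i' else a).
  by congr (sat p): Ha; apply: funext => -[i|w] //=; case: unliftP.
exists (y \o lift ord0), (y ord0); rewrite sat_rename.
by congr (sat p): Hy; apply: funext => -[i|w] //=; case: unliftP => [j ->|->].
Qed.

Definition fTrue (W : Type) : form L W := fAll (fEq (tvar L None) (tvar L None)).

Definition fConj (W : Type) (ps : seq (form L W)) : form L W :=
  foldr (@fAnd L W) (fTrue W) ps.

Lemma sat_fConj W (T : eqType) (g : T -> form L W) (s : seq T) (e : W -> M) :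
  sat (fConj (map g s)) e <-> {in s, forall x, sat (g x) e}.
Proof.
elim: s => [|y s IH] /=; first by split=> // _ x.
rewrite [sat _ _]/= IH; split=> [[gy gs] x|gs].
  by rewrite inE => /predU1P[->|/gs].
by split=> [|x xs]; apply: gs; rewrite inE ?eqxx ?xs ?orbT.
Qed.

End Syntax.

Lemma card_preim_leq (T : finType) (U : eqType) (f : T -> U) (s : seq U) :
  injective f -> #|[set t | f t \in s]| <= size s.
Proof.
move=> f_inj; rewrite cardE -(size_map f); apply: uniq_leq_size.
  by rewrite map_inj_uniq ?enum_uniq.
by move=> _ /mapP[t + ->]; rewrite mem_enum inE.
Qed.

Lemma card_sep_sum (T : finType) (A : {pred T}) (P : pred T) :
  #|[set y in A | P y]| = \sum_(y in A) P y.
Proof.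
rewrite -sum1dep_card big_mkcondr /=; apply: eq_bigr => y _.
by case: (P y).
Qed.

Section IndependentSets.

Variables (T : finType) (E : rel T) (D : nat).
Hypothesis outdeg_E : forall x, #|[set y | E x y]| <= D.

Lemma outdeg_in (A : {set T}) x : #|[set y in A | E x y]| <= D.
Proof.
apply: leq_trans (outdeg_E x); apply/subset_leq_card/subsetP => y.
by rewrite !inE => /andP[].
Qed.

Lemma exists_low_indegree (A : {set T}) :
  A != set0 -> exists2 x, x \in A & #|[set y in A | E y x]| <= D.
Proof.
move=> /set0Pn[x0 Ax0]; apply/exists_inP; apply: contraT => /exists_inPn high.
suff : \sum_(x in A) D.+1 <= \sum_(y in A) D.
  by rewrite !sum_nat_const leq_mul2l ltnn orbF => /eqP/card0_eq/(_ x0); rewrite Ax0.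
apply: (@leq_trans (\sum_(x in A) \sum_(y in A) E y x)).
  by apply: leq_sum => x Ax; rewrite -card_sep_sum ltnNge high.
by rewrite exchange_big; apply: leq_sum => y _; rewrite -card_sep_sum outdeg_in.
Qed.

Lemma bounded_outdegree_independent K (A : {set T}) :
  D.*2.+1 * K <= #|A| ->
  exists2 S : {set T}, S \subset A /\ #|S| = K & {in S &, forall x y, x != y -> ~~ E x y}.
Proof.
elim: K A => [|K IH] A sizeA.
  by exists set0; [rewrite sub0set cards0 | move=> x y; rewrite inE].
have [x Ax indeg_x] : exists2 x, x \in A & #|[set y in A | E y x]| <= D.
  by apply: exists_low_indegree; rewrite -card_gt0; move: sizeA; rewrite mulnS; lia.
pose nbhd := x |: ([set y in A | E x y] :|: [set y in A | E y x]).
have size_nbhd : #|A :&: nbhd| <= D.*2.+1.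
  rewrite (leq_trans (subset_leq_card (subsetIr _ _))) // cardsU1 -addnn -add1n.
  by rewrite leq_add ?leq_b1 // (leq_trans (leq_card_setU _ _)) // leq_add ?outdeg_in.
have /IH[S [sub_S size_S] indep_S] : D.*2.+1 * K <= #|A :\: nbhd|.
  by rewrite cardsD; move: sizeA size_nbhd; rewrite mulnS; lia.
have notin_nbhd y : y \in S -> [&& y != x, ~~ E x y & ~~ E y x].
  by move/(subsetP sub_S); rewrite !inE; case: (y \in A); rewrite ?andbF // !negb_or andbT.
exists (x |: S).
  split; first by rewrite subUset sub1set Ax (subset_trans sub_S) ?subsetDl.
  by rewrite cardsU1 size_S; case/boolP: (x \in S) => // /notin_nbhd; rewrite eqxx.
move=> y z; rewrite !inE => /predU1P[->|Sy] /predU1P[->|Sz]; rewrite ?eqxx //.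
- by case/and3P: (notin_nbhd z Sz).
- by case/and3P: (notin_nbhd y Sy).
- exact: indep_S.
Qed.

End IndependentSets.

Definition qftp_over (A : Type) (J : pred nat) (x y : A -> nat) : Prop :=
  qftp_eq x y /\
  forall p w, J w -> (x p < w) = (y p < w) /\ (x p == w) = (y p == w).

Lemma qftp_over_sym (A : Type) (J : pred nat) (x y : A -> nat) :
  qftp_over J x y -> qftp_over J y x.
Proof.
case=> int ext; split=> [p q|p w Jw].
  by case: (int p q) => -> ->.
by case: (ext p w Jw) => -> ->.
Qed.

Lemma qftp_over_trans (A : Type) (J : pred nat) (x y z : A -> nat) :
  qftp_over J x y -> qftp_over J y z -> qftp_over J x z.
Proof.
case=> int1 ext1 [int2 ext2]; split=> [p q|p w Jw].
  by case: (int1 p q) (int2 p q) => -> -> [-> ->].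
by case: (ext1 p w Jw) (ext2 p w Jw) => -> -> [-> ->].
Qed.

Lemma qftp_eq_shift (A : Type) (x : A -> nat) (moved : pred A) :
  (forall p q, moved p -> ~~ moved q -> x q != x p /\ x q != (x p).+1) ->
  qftp_eq x (fun p => x p + moved p).
Proof.
move=> gap p q.
case Mp: (moved p); case Mq: (moved q) => /=.
- split; lia.
- by have := gap p q Mp; rewrite Mq => /(_ isT); split; lia.
- by have := gap q p Mq; rewrite Mp => /(_ isT); split; lia.
- split; lia.
Qed.

Lemma qftp_over_shift (A : Type) (J : pred nat) (x : A -> nat) (v : nat) :
  (forall p, x p != v.+1) -> ~~ J v -> ~~ J v.+1 ->
  qftp_over J x (fun p => x p + (x p == v)).
Proof.
move=> no_succ notJv notJSv; split.
  apply: qftp_eq_shift => p q /eqP xp_v xq_v.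
  by rewrite xp_v; split; [exact: xq_v | exact: no_succ].
move=> p w Jw; have w_v : w != v by apply: contraNneq notJv => <-.
have w_Sv : w != v.+1 by apply: contraNneq notJSv => <-.
by case: eqP; split; lia.
Qed.

Lemma qftp_over_of_tp_over (p d : nat) (J : pred nat) (x y : 'I_p -> nat)
    (c : 'I_d -> nat) :
  (forall w, J w -> exists q, c q = w) ->
  qftp_eq (tp_over x c) (tp_over y c) -> qftp_over J x y.
Proof.
move=> J_c xy; split=> [l l'|l w /J_c[q <-]]; first exact: (xy (inl l) (inl l')).
exact: (xy (inl l) (inr q)).
Qed.

Section IndexTuples.

Variables (k : nat) (N : 'I_k -> nat) (r : nat).

Definition coord (i : 'I_r -> idx N) (s : 'I_k) (l : 'I_r) : nat := i l s.

Definition shift_up (i : 'I_r -> idx N) (s : 'I_k) (v : nat) : 'I_r -> idx N :=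
  fun l s' => if (s' == s) && (coord i s l == v) then insubd (i l s') v.+1 else i l s'.

Lemma coord_shift_up i s v s' l : v.+1 < N s ->
  coord (shift_up i s v) s' l =
    if s' == s then coord i s l + (coord i s l == v) else coord i s' l.
Proof.
move=> Sv_lt; rewrite /coord /shift_up; have [->|//] := eqVneq s' s.
by rewrite /= /coord; case: eqP => [->|_]; rewrite ?addn0 // val_insubd Sv_lt addn1.
Qed.

Definition agree_off (s : 'I_k) (i i' : 'I_r -> idx N) :=
  forall l s', s' != s -> i l s' = i' l s'.

Lemma shift_up_agree_off i s v : agree_off s (shift_up i s v) i.
Proof. by move=> l s' ne; rewrite /shift_up (negbTE ne). Qed.

Lemma agree_off_sym s i i' : agree_off s i i' -> agree_off s i' i.
Proof. by move=> off l s' ne; rewrite off. Qed.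

Lemma agree_off_coord_eq s i i' :
  agree_off s i i' -> coord i s =1 coord i' s -> i = i'.
Proof.
move=> off on; apply: funext => l; apply: functional_extensionality_dep => s'.
have [->|ne] := eqVneq s' s; last exact: off.
exact/val_inj/on.
Qed.

Definition dist (s : 'I_k) (i i' : 'I_r -> idx N) : nat :=
  \sum_(l < r) ((coord i s l - coord i' s l) + (coord i' s l - coord i s l)).

Lemma distC s i i' : dist s i i' = dist s i' i.
Proof. by apply: eq_bigr => l _; rewrite addnC. Qed.

End IndexTuples.

Section Flips.

Variables (k : nat) (N : 'I_k -> nat) (r : nat) (F : ('I_r -> idx N) -> Prop).

Definition flip_witness (s : 'I_k) (v : nat) (i : 'I_r -> idx N) :=
  [/\ v.+1 < N s, exists l, coord i s l = v, forall l, coord i s l != v.+1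
    & ~ (F i <-> F (shift_up i s v))].

Definition is_flip (s : 'I_k) (v : nat) := exists i, flip_witness s v i.

Section OneCoordinate.

Variables (s : 'I_k) (J : pred nat).
Hypothesis flips_in_J : forall v, is_flip s v -> J v.

Lemma shift_toward i i' :
  agree_off s i i' -> qftp_over J (coord i s) (coord i' s) ->
  (exists l, coord i s l < coord i' s l) ->
  exists i'', [/\ F i <-> F i'', agree_off s i'' i',
    qftp_over J (coord i'' s) (coord i' s) & dist s i'' i' < dist s i i'].
Proof.
move=> off xx' [l1 lt_l1]; have [int ext] := xx'.
(* Moving up the largest entry that lies below its target cannot collide. *)
case: (@arg_maxnP _ l1 [pred l | coord i s l < coord i' s l] (coord i s) lt_l1).
move=> l0 /= lt_l0 max_l0.
set v := coord i s l0 in lt_l0 max_l0.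
have below l : coord i s l = v -> v < coord i' s l.
  by move=> Ev; case: (int l l0) => _; rewrite Ev eqxx => /esym/eqP ->.
have no_succ l : coord i s l != v.+1.
  apply/eqP => Ev; case: (int l0 l) => + _; rewrite Ev ltnSn => /esym lt'.
  have /max_l0 : coord i s l < coord i' s l by rewrite Ev; lia.
  by rewrite Ev /v; lia.
have Sv_lt : v.+1 < N s by apply: leq_ltn_trans (ltn_ord (i' l0 s)).
have notJv : ~~ J v.
  by apply/negP => /(ext l0)[_]; rewrite eqxx => /esym/eqP; lia.
have notJSv : ~~ J v.+1.
  by apply/negP => /(ext l0)[]; rewrite ltnSn => /esym; lia.
exists (shift_up i s v); split.
- case: (EM (F i <-> F (shift_up i s v))) => // no_inv.
  by case/negP: notJv; apply: flips_in_J; exists i; split=> //; exists l0.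
- by move=> l s' ne; rewrite shift_up_agree_off // off.
- have shifted : qftp_over J (coord i s) (coord (shift_up i s v) s).
    have -> : coord (shift_up i s v) s = fun l => coord i s l + (coord i s l == v).
      by apply: funext => l; rewrite coord_shift_up // eqxx.
    exact: qftp_over_shift.
  exact: qftp_over_trans (qftp_over_sym shifted) xx'.
- rewrite /dist (bigD1 l0) //= [X in _ < X](bigD1 l0) //= -addSn.
  apply: leq_add.
    by rewrite coord_shift_up // !eqxx; lia.
  apply: leq_sum => l _; rewrite coord_shift_up // eqxx.
  by case: eqP => [Ev|_]; [have := below l Ev | ]; lia.
Qed.

Lemma flip_free_coord_invariant i i' :
  agree_off s i i' -> qftp_over J (coord i s) (coord i' s) -> F i <-> F i'.
Proof.
have [m lt_dist] := ubnP (dist s i i').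
elim: m => // m IH in i i' lt_dist *; move=> off xx'.
have [[l lt_l]|no_lt] := pselect (exists l, coord i s l < coord i' s l).
  have [i'' [-> off'' xx'' lt'']] := shift_toward off xx' (ex_intro _ l lt_l).
  exact: IH _ _ (leq_trans lt'' (ltnSE lt_dist)) off'' xx''.
have [[l lt_l]|no_gt] := pselect (exists l, coord i' s l < coord i s l).
  have [i'' [-> off'' xx'' lt'']] :=
    shift_toward (agree_off_sym off) (qftp_over_sym xx') (ex_intro _ l lt_l).
  rewrite distC in lt_dist.
  by apply: iff_sym; exact: IH _ _ (leq_trans lt'' (ltnSE lt_dist)) off'' xx''.
rewrite (agree_off_coord_eq off) // => l.
case: (ltngtP (coord i s l) (coord i' s l)) => [lt_l|gt_l|//].
- by case: no_lt; exists l.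
- by case: no_gt; exists l.
Qed.

End OneCoordinate.

Lemma flip_free_invariant (J : 'I_k -> pred nat) :
  (forall s v, is_flip s v -> J s v) ->
  forall i0 i1, (forall s, qftp_over (J s) (coord i0 s) (coord i1 s)) -> F i0 <-> F i1.
Proof.
move=> flips_in_J i0 i1 xx'.
pose hybrid m : 'I_r -> idx N := fun l s => if s < m then i1 l s else i0 l s.
have hybrid_step m (lt_mk : m < k) : F (hybrid m) <-> F (hybrid m.+1).
  pose s := Ordinal lt_mk.
  apply: (@flip_free_coord_invariant s (J s)) => [v /flips_in_J //|l s' ne|].
    have ne_m : nat_of_ord s' != m := ne.
    by rewrite /hybrid ltnS [in X in _ = X]leq_eqVlt (negbTE ne_m).
  by rewrite /coord /hybrid /= ltnn ltnSn; exact: xx'.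
have hybrid0 : hybrid 0 = i0.
  by apply: funext => l; apply: functional_extensionality_dep.
have hybridk : hybrid k = i1.
  by apply: funext => l; apply: functional_extensionality_dep => s; rewrite /hybrid ltn_ord.
have : forall m, m <= k -> F i0 <-> F (hybrid m).
  elim=> [|m IH] le_mk; first by rewrite hybrid0.
  exact: iff_trans (IH (ltnW le_mk)) (hybrid_step m le_mk).
by rewrite -hybridk; apply.
Qed.

End Flips.

Lemma iff_of_not_iff (A B C : Prop) : ~ (A <-> B) -> ~ (A <-> C) -> (B <-> C).
Proof. by case: (EM A) (EM B) (EM C); tauto. Qed.

Section ManyFlips.

Variables (k : nat) (N : 'I_k -> nat) (r : nat) (F : ('I_r -> idx N) -> Prop).
Variable s : 'I_k.

Lemma independent_flips K (P : seq nat) :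
  uniq P -> (forall v, v \in P -> is_flip F s v) -> r.*2.*2.+1 * K <= size P ->
  exists (w : 'I_K -> 'I_r -> idx N) (v : 'I_K -> nat),
    (forall t, flip_witness F s (v t) (w t)) /\
    (forall t t' l, t != t' -> coord (w t') s l != v t /\ coord (w t') s l != (v t).+1).
Proof.
move=> uniq_P flips_P size_P.
pose vt (t : 'I_(size P)) := nth 0 P t.
have vt_inj : injective vt by move=> t t' /eqP; rewrite nth_uniq // => /eqP/val_inj.
have [wt wtP] := choice (fun t => flips_P (vt t) (mem_nth 0 (ltn_ord t))).
pose hits t' t := (t' != t) &&
  ((vt t \in codom (coord (wt t') s)) || ((vt t).+1 \in codom (coord (wt t') s))).
have outdeg_hits t' : #|[set t | hits t' t]| <= r.*2.
  pose hit_at (u : 'I_(size P) -> nat) := [set t | u t \in codom (coord (wt t') s)].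
  apply: (@leq_trans #|hit_at vt :|: hit_at (succn \o vt)|).
    by apply/subset_leq_card/subsetP => t; rewrite !inE => /andP[].
  have succ_vt_inj : injective (succn \o vt) by move=> u u' /succn_inj/vt_inj.
  rewrite -addnn (leq_trans (leq_card_setU _ _)) // leq_add //.
  - by apply: leq_trans (card_preim_leq _ vt_inj) _; rewrite size_codom card_ord.
  - by apply: leq_trans (card_preim_leq _ succ_vt_inj) _; rewrite size_codom card_ord.
have : r.*2.*2.+1 * K <= #|[set: 'I_(size P)]| by rewrite cardsT card_ord.
case/(bounded_outdegree_independent outdeg_hits) => S0 [_ size_S0] indep_S0.
pose g (t : 'I_K) : 'I_(size P) := enum_val (cast_ord (esym size_S0) t).
have g_inj : injective g by move=> t t' /enum_val_inj/cast_ord_inj.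
exists (wt \o g), (vt \o g); split=> [t|t t' l ne]; first exact: wtP.
have ne_g : g t' != g t by rewrite (inj_eq g_inj) eq_sym.
have := indep_S0 _ _ (enum_valP _) (enum_valP _) ne_g; rewrite /hits ne_g /= negb_or.
by case/andP=> hit hit_succ; split; [move: hit | move: hit_succ];
  apply: contraNneq => <-; exact: codom_f.
Qed.

Lemma shattering_configurations K (w : 'I_K -> 'I_r -> idx N) (v : 'I_K -> nat) :
  (forall t, flip_witness F s (v t) (w t)) ->
  (forall t t' l, t != t' -> coord (w t') s l != v t /\ coord (w t') s l != (v t).+1) ->
  forall S : {set 'I_K}, exists cfg : 'I_K -> 'I_r -> idx N,
    (forall s', qftp_eq (fun p : 'I_K * 'I_r => coord (w p.1) s' p.2)
                        (fun p => coord (cfg p.1) s' p.2)) /\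
    (forall t, F (cfg t) <-> t \in S).
Proof.
move=> witness indep S.
pose keep t := `[< F (w t) <-> t \in S >].
exists (fun t => if keep t then w t else shift_up (w t) s (v t)).
split=> [s'|t]; last first.
  rewrite /keep; case: asboolP => // not_keep.
  have [_ _ _ flip_t] := witness t.
  exact: iff_of_not_iff flip_t not_keep.
pose moved (p : 'I_K * 'I_r) := [&& ~~ keep p.1, s' == s & coord (w p.1) s p.2 == v p.1].
have -> : (fun p => coord (if keep p.1 then w p.1 else shift_up (w p.1) s (v p.1)) s' p.2) =
          (fun p => coord (w p.1) s' p.2 + moved p).
  apply: funext => -[t l]; rewrite /moved /=; case: (keep t) => /=; first by rewrite addn0.
  have [Sv_lt _ _ _] := witness t.
  by rewrite coord_shift_up //; case: eqVneq => [->|]; rewrite ?addn0.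
apply: qftp_eq_shift => -[t l] [t' l'] /and3P[/= not_keep /eqP s'_s /eqP xp].
subst s'; rewrite xp.
have [<-|ne] := eqVneq t t'; last by move=> _; exact: indep.
move=> not_moved; split; last by have [_ _ no_succ _] := witness t.
by apply: contraNneq not_moved => E; apply/and3P; split=> //=; rewrite ?E eqxx.
Qed.

End ManyFlips.

Lemma In_map (T : eqType) (B : Type) (f : T -> B) (x : T) (s : seq T) :
  x \in s -> List.In (f x) (map f s).
Proof. by elim: s => //= y s IH; rewrite inE => /predU1P[->|/IH]; [left | right]. Qed.

Section ShatterForms.

Variables (L : language) (M : structure L) (n r m : nat).
Variable phi : form L ('I_n + 'I_r * 'I_m).

(* y0 fills the y-variables of the parameter assignments, which NIP_partition
   ignores. *)
Lemma NIP_partition_bounded W (psi : form L ('I_n + W)) :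
  NIP_partition M psi (fun v => if v is inr _ then true else false) ->
  exists K, forall (y : 'I_K -> W -> M) (y0 : W -> M),
    ~ forall S : {set 'I_K}, exists x, forall t, sat psi (catv x (y t)) <-> t \in S.
Proof.
case=> K not_shattered; exists K => y y0 shattered; apply: not_shattered.
have [xs xsP] := choice shattered.
exists (fun t => catv (xs set0) (y t)), (fun S => catv (xs S) y0) => t S.
by rewrite -(xsP S t) (_ : (fun v => _) = catv (xs S) (y t)) //; apply: funext => -[].
Qed.

Definition phi_at k (N : 'I_k -> nat) (b : 'I_n -> M) (a : idx N -> 'I_m -> M)
    (i : 'I_r -> idx N) : Prop :=
  sat phi (catv b (fun lc => a (i lc.1) lc.2)).

Definition block_var K (t : 'I_K) (v : 'I_n + 'I_r * 'I_m) :
    'I_n + 'I_#|{: 'I_K * 'I_r}| * 'I_m :=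
  match v with inl c => inl c | inr lc => inr (enum_rank (t, lc.1), lc.2) end.

Definition signed V (b : bool) (p : form L V) : form L V := if b then p else fNot p.

Definition shatter_form K (S : {set 'I_K}) : form L ('I_#|{: 'I_K * 'I_r}| * 'I_m) :=
  fExs (fConj [seq signed (t \in S) (frename phi (block_var t)) | t <- enum 'I_K]).

Definition shatter_forms K : seq {p : nat & form L ('I_p * 'I_m)} :=
  [seq existT _ _ (shatter_form A) | A <- enum {set 'I_K}].

Definition block_assignment K (y : 'I_#|{: 'I_K * 'I_r}| * 'I_m -> M) (t : 'I_K) :
    'I_r * 'I_m -> M :=
  fun lc => y (enum_rank (t, lc.1), lc.2).

Lemma sat_shatter_form K (S : {set 'I_K}) y :
  sat (shatter_form S) y <->
  exists x, forall t, sat phi (catv x (block_assignment y t)) <-> t \in S.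
Proof.
have block_varE x t : catv x y \o block_var t = catv x (block_assignment y t).
  by apply: funext => -[].
rewrite sat_fExs; split=> -[x sat_x]; exists x.
  move=> t; move/sat_fConj/(_ t (mem_enum _ t)): sat_x.
  by rewrite /signed; case: (t \in S) => /=; rewrite sat_rename block_varE; split.
apply/sat_fConj => t _; move: (sat_x t); rewrite /signed.
by case: (t \in S) => /=; rewrite sat_rename block_varE => -[]; auto.
Qed.

Lemma shattered_of_indiscernible K k (N : 'I_k -> nat) (a : idx N -> 'I_m -> M)
    (b : 'I_n -> M) (base : 'I_K -> 'I_r -> idx N) :
  indiscernible (shatter_forms K) a ->
  (forall S : {set 'I_K}, exists cfg : 'I_K -> 'I_r -> idx N,
     (forall s, qftp_eq (fun p : 'I_K * 'I_r => coord (base p.1) s p.2)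
                        (fun p => coord (cfg p.1) s p.2)) /\
     (forall t, phi_at b a (cfg t) <-> t \in S)) ->
  forall S : {set 'I_K}, exists x, forall t, phi_at x a (base t) <-> t \in S.
Proof.
move=> indisc configs S; have [cfg [same_tp cfgP]] := configs S.
pose flat (c : 'I_K -> 'I_r -> idx N) (q : 'I_#|{: 'I_K * 'I_r}|) :=
  c (enum_val q).1 (enum_val q).2.
have flatK c t :
    block_assignment (fun z => a (flat c z.1) z.2) t = fun lc => a (c t lc.1) lc.2.
  by apply: funext => lc; rewrite /block_assignment /flat enum_rankK.
have := indisc _ (In_map _ (mem_enum _ S)) (flat base) (flat cfg)
  (fun s q q' => same_tp s (enum_val q) (enum_val q')).
rewrite /= !sat_shatter_form => [[_ cfg_base]].
have [|x shattered_x] := cfg_base; first by exists b => t; rewrite flatK; exact: cfgP.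
by exists x => t; rewrite /phi_at -flatK.
Qed.

End ShatterForms.

Section FewFlips.

Variables (L : language) (M : structure L) (n r m : nat).
Variable phi : form L ('I_n + 'I_r * 'I_m).
Variable K : nat.
Hypothesis not_shattered : forall (y : 'I_K -> 'I_r * 'I_m -> M) (y0 : 'I_r * 'I_m -> M),
  ~ forall S : {set 'I_K}, exists x, forall t, sat phi (catv x (y t)) <-> t \in S.

Variables (k : nat) (N : 'I_k -> nat) (a : idx N -> 'I_m -> M) (b : 'I_n -> M).
Hypothesis N_gt0 : forall s, 0 < N s.
Hypothesis indisc : indiscernible (shatter_forms phi K) a.

Lemma few_flips s (P : seq nat) :
  uniq P -> (forall v, v \in P -> is_flip (phi_at phi b a) s v) ->
  size P < r.*2.*2.+1 * K.
Proof.
move=> uniq_P flips_P; rewrite ltnNge; apply/negP => /(independent_flips uniq_P flips_P).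
case=> w [v [witness indep]].
pose j0 : idx N := fun s => Ordinal (N_gt0 s).
apply: (@not_shattered (fun t lc => a (w t lc.1) lc.2) (fun lc => a j0 lc.2)).
exact: shattered_of_indiscernible indisc (shattering_configurations witness indep).
Qed.

End FewFlips.

Theorem lemma3p5 (L : language) (M : structure L) (n r m : nat)
  (phi : form L ('I_n + 'I_r * 'I_m)) :
  NIP M phi ->
  exists (d' : nat) (Delta : seq {p : nat & form L ('I_p * 'I_m)}),
    forall (k : nat) (N : 'I_k -> nat), (forall s : 'I_k, 0 < N s) ->
    forall (b : 'I_n -> M) (a : idx N -> 'I_m -> M),
      @indiscernible L M m Delta k N a ->
      exists j : 'I_d' -> idx N,
        forall i0 i1 : 'I_r -> idx N,
          (forall s : 'I_k,
             qftp_eq (tp_over (fun l => nat_of_ord (i0 l s)) (fun q => nat_of_ord (j q s)))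
                     (tp_over (fun l => nat_of_ord (i1 l s)) (fun q => nat_of_ord (j q s)))) ->
          (sat phi (fun v => match v with
                             | inl c => b c
                             | inr lc => a (i0 lc.1) lc.2 end) <->
           sat phi (fun v => match v with
                             | inl c => b c
                             | inr lc => a (i1 lc.1) lc.2 end)).
Proof.
move=> NIP_phi; have [K not_shattered] := NIP_partition_bounded (NIP_phi _).
exists (r.*2.*2.+1 * K), (shatter_forms phi K) => k N N_gt0 b a indisc.
pose F := phi_at phi b a.
pose flips s := [seq v <- iota 0 (N s) | `[< is_flip F s v >]].
have flipsP s v : reflect (is_flip F s v) (v \in flips s).
  rewrite mem_filter mem_iota /=; apply: (iffP andP) => [[/asboolP //]|flip_v].
  by split; [apply/asboolP | case: flip_v => i [Sv_lt _ _ _]; lia].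
have size_flips s : size (flips s) < r.*2.*2.+1 * K.
  apply: (few_flips (b := b) (s := s) not_shattered N_gt0 indisc) => [|v /flipsP //].
  by rewrite filter_uniq ?iota_uniq.
pose j (q : 'I_(r.*2.*2.+1 * K)) : idx N :=
  fun s => insubd (Ordinal (N_gt0 s)) (nth 0 (flips s) q).
exists j; move=> i0 i1 same_tp.
apply: (@flip_free_invariant _ _ _ F (fun s v => v \in flips s) _ i0 i1).
  by move=> s v /flipsP.
move=> s; apply: qftp_over_of_tp_over (same_tp s) => w w_flip.
have lt_index : index w (flips s) < r.*2.*2.+1 * K.
  by rewrite (ltn_trans _ (size_flips s)) // index_mem.
exists (Ordinal lt_index); rewrite /j val_insubd /= nth_index //.
by move: w_flip; rewrite mem_filter mem_iota => /and3P[_ _ ->].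
Qed.
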